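(* Assume the problem is a quadratic program: there are constant matrices $H\in\mathbb{R}^{n\times n}$, $A_{\mathcal I}\in\mathbb{R}^{m_{\mathcal I}\times n}$, $A_{\mathcal E}\in\mathbb{R}^{m_{\mathcal E}\times n}$ with $H(x,\lambda)\equiv H$, $A_{\mathcal I}(x)\equiv A_{\mathcal I}$, $A_{\mathcal E}(x)\equiv A_{\mathcal E}$. In the setting of the context (with the sequences $\{\mu_k\}$, $\{w_k\}$, subsequence $\mathcal K$), for all $k\in\mathcal K$ sufficiently large and all $q\ge1$, $$J_F(w_{k+1})\,\hat w^{w^*,q+1}_{k+1}=-\sum_{i=1}^q\binom{q+1}{i}\begin{pmatrix}0\\ \bigl[\hat\Lambda^{w^*,q+1-i}_{k+1}\bigr]_{\mathcal I}A_{\mathcal I}\hat x^{w^*,i}_{k+1}\\ 0\end{pmatrix}.$$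
   Context: Problem: minimize $f(x)$ subject to $c_{\mathcal I}(x)\ge0$, $c_{\mathcal E}(x)=0$, $f,c_i\colon\mathbb{R}^n\to\mathbb{R}$, $c=(c_{\mathcal I}^T,c_{\mathcal E}^T)^T\in\mathbb{R}^m$, $m=m_{\mathcal I}+m_{\mathcal E}$. Notation: $g=\nabla f$, $A$ the Jacobian of $c$, $H(x,\lambda)$ the Hessian in $x$ of $f(x)-\lambda^Tc(x)$, $[\cdot]_S$ rows indexed by $S$, uppercase = diagonal matrix of the lowercase vector (so $\hat\Lambda=\mathrm{diag}(\hat\lambda)$), $e$ the all-ones vector, $w=(x,\lambda)$ with superscripts/subscripts applying to both parts. $F^\mu(x,\lambda)=\bigl(g(x)-A(x)^T\lambda;\ C_{\mathcal I}(x)[\lambda]_{\mathcal I}-\mu e;\ c_{\mathcal E}(x)\bigr)$ with Jacobian $J_F$ in $w$. Let $x^*$ be a KKT point at which LICQ, strict complementarity (multiplier $\lambda^*$ with $[\lambda^*]_i>0$ for active inequality indices) and strong second-order sufficiency ($p^TH(x^*,\lambda^* )p\ge\omega\|p\|^2$, $\omega>0$, for all $p$ orthogonal to all active constraint gradients) hold; $w^*=(x^*,\lambda^* )$. Let $w^{w^*,0}$ be the locally unique smooth function near $0$ with $F^0(w^{w^*,0}(r))=r$, $w^{w^*,0}(0)=w^*$; with $\mathrm{nml}(r)=r/\|r\|$ ($r\ne0$), $\mathrm{nml}(0)=0$, let $w^{w^*,\mu,r}(\rho)=w^{w^*,0}(\rho\,\mathrm{nml}(r)+(0,\mu e^T,0)^T)$.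 Let $\{\mu_k\}$ be strictly decreasing positive, $\{w_k\}$ with $\|F^{\mu_k}(w_{k+1})\|\le\epsilon(\mu_k)$, $\epsilon(\mu)=\Theta(\mu)$ positive, and $w_{k+1}\to w^*$ along a subsequence $\mathcal K$. Set $r_{k+1}=F^{\mu_{k+1}}(w_{k+1})$ and for $q\ge1$ $$\hat w^{w^*,q}_{k+1}=\frac{d^q w^{w^*,\mu_{k+1},r_{k+1}}(\rho)}{d\rho^q}\Big|_{\rho=\|r_{k+1}\|}\cdot(-\|r_{k+1}\|)^q.$$ *)

From HB Require Import structures.
From mathcomp Require Import all_boot all_order all_algebra.
From mathcomp Require Import all_classical all_reals all_analysis.
Set Implicit Arguments. Unset Strict Implicit. Unset Printing Implicit Defensive.
Import Order.TTheory GRing.Theory Num.Theory.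
Import numFieldNormedType.Exports.
Local Open Scope ring_scope.
Local Open Scope classical_set_scope.

Section Defs.
Variable R : realType.

Definition enorm (k : nat) (v : 'cV[R]_k) : R := Num.sqrt (\sum_i v i 0 ^+ 2).

Definition nml (k : nat) (r : 'cV[R]_k) : 'cV[R]_k :=
  if r == 0 then 0 else (enorm r)^-1 *: r.

(* Componentwise product of two vectors:  diag(u) v. *)
Definition cwmul (k : nat) (u v : 'cV[R]_k) : 'cV[R]_k := \col_i (u i 0 * v i 0).

Variables (n mI mE : nat).
(* Quadratic program data: f(x) = 1/2 x^T H x + d^T x (H symmetric),
   c_I(x) = A_I x - b_I, c_E(x) = A_E x - b_E. *)
Variables (H : 'M[R]_n) (d : 'cV[R]_n)
          (AI : 'M[R]_(mI, n)) (bI : 'cV[R]_mI)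
          (AE : 'M[R]_(mE, n)) (bE : 'cV[R]_mE).

Definition qp_g (x : 'cV[R]_n) : 'cV[R]_n := H *m x + d.
Definition qp_cI (x : 'cV[R]_n) : 'cV[R]_mI := AI *m x - bI.
Definition qp_cE (x : 'cV[R]_n) : 'cV[R]_mE := AE *m x - bE.
Definition qp_A : 'M[R]_(mI + mE, n) := col_mx AI AE.

Definition wx (w : 'cV[R]_(n + (mI + mE))) : 'cV[R]_n := usubmx w.
Definition wl (w : 'cV[R]_(n + (mI + mE))) : 'cV[R]_(mI + mE) := dsubmx w.
Definition wlI (w : 'cV[R]_(n + (mI + mE))) : 'cV[R]_mI := usubmx (wl w).

Definition Fmu (mu : R) (w : 'cV[R]_(n + (mI + mE))) : 'cV[R]_(n + (mI + mE)) :=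
  col_mx (qp_g (wx w) - qp_A^T *m wl w)
         (col_mx (cwmul (qp_cI (wx w)) (wlI w) - mu *: const_mx 1)
                 (qp_cE (wx w))).

Definition shift (mu : R) : 'cV[R]_(n + (mI + mE)) :=
  col_mx 0 (col_mx (mu *: const_mx 1) 0).

End Defs.

Definition jacF (R : realType) (M N : nat) (F : 'cV[R]_N -> 'cV[R]_M)
  (w : 'cV[R]_N) : 'M[R]_(M, N) :=
  \matrix_(i, j) (derive F w (delta_mx j 0 : 'cV[R]_N)) i 0.

Fixpoint iterD (R : realType) (N M : nat) (vs : seq 'cV[R]_N)
  (f : 'cV[R]_N -> 'cV[R]_M) : 'cV[R]_N -> 'cV[R]_M :=
  match vs with
  | [::] => f
  | v :: vs' => fun x => derive (iterD vs' f) x v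
  end.

Definition smooth_on (R : realType) (N M : nat) (U : set 'cV[R]_N)
  (f : 'cV[R]_N -> 'cV[R]_M) : Prop :=
  forall vs : seq 'cV[R]_N,
    (forall x v, U x -> derivable (iterD vs f) x v) /\
    {within U, continuous (iterD vs f)}.

Definition wpath (R : realType) (n mI mE : nat)
  (W : 'cV[R]_(n + (mI + mE)) -> 'cV[R]_(n + (mI + mE)))
  (mu : R) (r : 'cV[R]_(n + (mI + mE))) (rho : R) : 'cV[R]_(n + (mI + mE)) :=
  W (rho *: nml r + shift n mI mE mu).

Definition what (R : realType) (n mI mE : nat)
  (W : 'cV[R]_(n + (mI + mE)) -> 'cV[R]_(n + (mI + mE)))
  (mu : R) (r : 'cV[R]_(n + (mI + mE))) (q : nat) : 'cV[R]_(n + (mI + mE)) :=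
  (- enorm r) ^+ q *: derive1n q (wpath W mu r) (enorm r).

From Pilot Require Import Defs.
From HB Require Import structures.
From mathcomp Require Import all_boot all_order all_algebra.
From mathcomp Require Import all_classical all_reals all_analysis.
From mathcomp Require Import ring lra.
Import Order.TTheory GRing.Theory Num.Theory.
Import numFieldNormedType.Exports.
Local Open Scope ring_scope.
Local Open Scope classical_set_scope.

(* For a quadratic program, F^0 is a quadratic map w |-> c + L w + B(w, w) whose
   bilinear part B(v, v') = (0; diag([v]_I) A_I [v']_x; 0) comes from the
   complementarity block.  Along the curve gamma(rho) = W(rho u + s) we have
   F^0(gamma(rho)) = rho u + s, affine in rho, so its derivatives of order >= 2
   vanish; by Leibniz' rule this says
     J_F(gamma) gamma^(q+1) = - sum_(1 <= i <= q) C(q+1, i) B(gamma^(q+1-i), gamma^(i)),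
   and since (-|r|)^(q+1) = (-|r|)^(q+1-i) (-|r|)^i, scaling by (-|r|)^(q+1) gives
   the claimed identity at gamma(|r|) = W(F^0(w_(k+1))).  Finally
   W(F^0(w_(k+1))) = w_(k+1) for large k: differentiating F^0 o W = id at 0 shows
   that the Jacobian of F^0 at w* is invertible, so the quadratic map F^0 is
   injective near w*, and both points tend to w*.
   Only W, its smoothness and the convergence of w_(k+1) are used. *)

Section MatrixCurves.
Context {R : realFieldType}.

Lemma is_derive_mx_entry {p q : nat} {f : R -> 'M[R]_(p, q)} {x : R} {df : 'M[R]_(p, q)} :
  is_derive x 1 f df -> forall i j, is_derive x 1 (fun t => f t i j) (df i j).
Proof.
move=> [f_der <-] i j; have fij_der := (derivable_mxP f x 1).1 f_der i j.
by apply: DeriveDef => //; rewrite derive_mx // mxE.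
Qed.

Lemma is_derive_mx {p q : nat} (f : R -> 'M[R]_(p, q)) (x : R) (df : 'M[R]_(p, q)) :
  (forall i j, is_derive x 1 (fun t => f t i j) (df i j)) -> is_derive x 1 f df.
Proof.
move=> f_der.
have fd : derivable f x 1 by apply/derivable_mxP => i j; case: (f_der i j).
apply: DeriveDef => //; rewrite derive_mx //; apply/matrixP => i j.
by rewrite mxE; case: (f_der i j).
Qed.

Lemma is_derive_mulmx {p q r : nat} (M : 'M[R]_(r, p)) {f : R -> 'M[R]_(p, q)} {x : R}
    {df : 'M[R]_(p, q)} :
  is_derive x 1 f df -> is_derive x 1 (fun t => M *m f t) (M *m df).
Proof.
move=> f_der; apply: is_derive_mx => i j; rewrite mxE.
have -> : (fun t => (M *m f t) i j) = \sum_(l < p) (fun t => M i l * f t l j).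
  by apply/funext => t; rewrite fct_sumE mxE.
apply: (is_derive_sum (h := fun l t => M i l * f t l j)) => l.
by have := is_deriveZ (M i l) (is_derive_mx_entry f_der l j).
Qed.

Lemma is_derive_line {p q : nat} (u s : 'M[R]_(p, q)) (r : R) :
  is_derive r 1 (fun t : R => t *: u + s) u.
Proof.
apply: is_derive_mx => i j.
have -> : (fun t => (t *: u + s) i j) = (fun t => t * u i j + s i j).
  by apply/funext => t; rewrite !mxE.
by apply: is_derive_eq; rewrite scaler0 add0r addr0 [_%:A]mulr1.
Qed.

End MatrixCurves.

Section MatrixNorm.
Context {R : realFieldType}.

Lemma norm_mx_entry_le {p q : nat} (M : 'M[R]_(p, q)) i j : `|M i j| <= `|M|.
Proof. by rewrite [leRHS]/Num.Def.normr /= mx_normrE; exact: (le_bigmax _ _ (i, j)). Qed.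

Lemma norm_mx_le {p q : nat} (M : 'M[R]_(p, q)) (c : R) :
  0 <= c -> (forall i j, `|M i j| <= c) -> `|M| <= c.
Proof.
move=> c_ge0 Mc; rewrite [leLHS]/Num.Def.normr /= mx_normrE.
by apply: bigmax_le => // -[i j] _; exact: Mc.
Qed.

Lemma norm_mulmx_le {p q r : nat} (A : 'M[R]_(p, q)) (B : 'M[R]_(q, r)) :
  `|A *m B| <= q%:R * `|A| * `|B|.
Proof.
apply: norm_mx_le => [|i j]; first by rewrite !mulr_ge0.
rewrite mxE (le_trans (ler_norm_sum _ _ _)) //.
rewrite -mulrA mulr_natl -[q in _ *+ q]card_ord -sumr_const.
apply: ler_sum => l _; rewrite normrM.
by apply: ler_pM => //; exact: norm_mx_entry_le.
Qed.

End MatrixNorm.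

Section ComponentwiseProduct.
Context {R : realType} {k : nat}.
Implicit Types (a b c : 'cV[R]_k) (x : R).

Lemma cwmulC a b : cwmul a b = cwmul b a.
Proof. by apply/matrixP => i j; rewrite !mxE mulrC. Qed.

Lemma cwmulDl a b c : cwmul (a + b) c = cwmul a c + cwmul b c.
Proof. by apply/matrixP => i j; rewrite !mxE mulrDl. Qed.

Lemma cwmulDr a b c : cwmul a (b + c) = cwmul a b + cwmul a c.
Proof. by apply/matrixP => i j; rewrite !mxE mulrDr. Qed.

Lemma cwmulZl x a b : cwmul (x *: a) b = x *: cwmul a b.
Proof. by apply/matrixP => i j; rewrite !mxE mulrA. Qed.

Lemma cwmulZr x a b : cwmul a (x *: b) = x *: cwmul a b.
Proof. by apply/matrixP => i j; rewrite !mxE mulrCA. Qed.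

Lemma cwmul_diag_mx a b : cwmul a b = diag_mx a^T *m b.
Proof. by apply/matrixP => i j; rewrite mul_diag_mx !mxE (ord1 j). Qed.

Lemma norm_cwmul_le a b : `|cwmul a b| <= `|a| * `|b|.
Proof.
apply: norm_mx_le => [|i j]; first by rewrite mulr_ge0.
by rewrite mxE normrM ler_pM // norm_mx_entry_le.
Qed.

Lemma is_derive_cwmul {f g : R -> 'cV[R]_k} {x : R} {df dg : 'cV[R]_k} :
  is_derive x 1 f df -> is_derive x 1 g dg ->
  is_derive x 1 (fun t => cwmul (f t) (g t)) (cwmul df (g x) + cwmul (f x) dg).
Proof.
move=> f_der g_der; apply: is_derive_mx => i j.
have -> : (fun t => cwmul (f t) (g t) i j) = (fun t => f t i 0) * (fun t => g t i 0).
  by apply/funext => t; rewrite !mxE.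
apply: is_derive_eq.
  exact: is_deriveM (is_derive_mx_entry f_der i 0) (is_derive_mx_entry g_der i 0).
by rewrite !mxE addrC [df i 0 * _]mulrC.
Qed.

End ComponentwiseProduct.

Section QuadraticMap.
Context {R : realType} {N k : nat} (c : 'cV[R]_N) (L : 'M[R]_N)
  (E : 'M[R]_(N, k)) (S T : 'M[R]_(k, N)).
Implicit Types (a b u v w : 'cV[R]_N).

Definition qbil u v : 'cV[R]_N := E *m cwmul (S *m u) (T *m v).
Definition qmap w : 'cV[R]_N := c + L *m w + qbil w w.
Definition qjac w : 'M[R]_N :=
  L + E *m diag_mx (S *m w)^T *m T + E *m diag_mx (T *m w)^T *m S.

Lemma qbilDl a b v : qbil (a + b) v = qbil a v + qbil b v.
Proof. by rewrite /qbil mulmxDr cwmulDl mulmxDr. Qed.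

Lemma qbilDr v a b : qbil v (a + b) = qbil v a + qbil v b.
Proof. by rewrite /qbil mulmxDr cwmulDr mulmxDr. Qed.

Lemma qbilZl (x : R) u v : qbil (x *: u) v = x *: qbil u v.
Proof. by rewrite /qbil -scalemxAr cwmulZl scalemxAr. Qed.

Lemma qbilZr (x : R) u v : qbil u (x *: v) = x *: qbil u v.
Proof. by rewrite /qbil -scalemxAr cwmulZr scalemxAr. Qed.

Lemma qjacE w v : qjac w *m v = L *m v + qbil w v + qbil v w.
Proof.
by rewrite /qjac /qbil [cwmul (S *m v) _]cwmulC !cwmul_diag_mx !mulmxDl -!mulmxA.
Qed.

Lemma qjacD w a v : qjac (w + a) *m v = qjac w *m v + qbil a v + qbil v a.
Proof. by rewrite !qjacE qbilDl qbilDr !addrA; congr (_ + _); rewrite addrAC. Qed.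

Lemma qmap_taylor w v (h : R) :
  qmap (w + h *: v) = qmap w + h *: (qjac w *m v) + h ^+ 2 *: qbil v v.
Proof.
rewrite qjacE /qmap !qbilDl !qbilDr !qbilZl !qbilZr scalerA -expr2.
rewrite mulmxDr -scalemxAr !scalerDr !addrA.
by congr (_ + _ + _ + _); rewrite addrAC.
Qed.

Lemma is_derive_qmap w v : is_derive w v qmap (qjac w *m v).
Proof.
have quotient_cvg : (fun h : R => h^-1 *: (qmap (h *: v + w) - qmap w)) @ 0^' -->
    qjac w *m v.
  have lin_cvg : (fun h : R => qjac w *m v + h *: qbil v v) @ 0^' --> qjac w *m v.
    rewrite -[X in _ --> X]addr0 -(scale0r (qbil v v)).
    apply: cvgD; first exact: cvg_cst.
    by apply: cvgZr_tmp; exact: nbhs_dnbhs.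
  apply: cvg_trans lin_cvg; apply: near_eq_cvg; near=> h.
  have h_neq0 : h != 0 by near: h; exact: nbhs_dnbhs_neq.
  rewrite /= [h *: v + w]addrC qmap_taylor addrAC [qmap w + _]addrC addrK.
  by rewrite scalerDr !scalerA mulVf // scale1r expr2 mulrA mulVf // mul1r.
apply: DeriveDef; first by apply/cvg_ex; exists (qjac w *m v).
exact: cvg_lim quotient_cvg.
Unshelve. all: by end_near. Qed.

Lemma jacF_qmap w : jacF qmap w = qjac w.
Proof.
apply/matrixP => i j.
by rewrite mxE (@derive_val _ _ _ _ _ _ _ (is_derive_qmap w _)) -colE mxE.
Qed.

Lemma is_derive_qbil {f g : R -> 'cV[R]_N} {x : R} {df dg : 'cV[R]_N} :
  is_derive x 1 f df -> is_derive x 1 g dg ->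
  is_derive x 1 (fun t => qbil (f t) (g t)) (qbil df (g x) + qbil (f x) dg).
Proof.
move=> f_der g_der; apply: is_derive_eq; last by rewrite -mulmxDr.
exact: (is_derive_mulmx E (is_derive_cwmul (is_derive_mulmx S f_der)
                                            (is_derive_mulmx T g_der))).
Qed.

Definition qbil_bound : R := k%:R * `|E| * (N%:R * `|S|) * (N%:R * `|T|).

Lemma qbil_bound_ge0 : 0 <= qbil_bound.
Proof. by rewrite !mulr_ge0. Qed.

Lemma norm_qbil_le u v : `|qbil u v| <= qbil_bound * `|u| * `|v|.
Proof.
apply: le_trans (norm_mulmx_le _ _) _.
have -> : qbil_bound * `|u| * `|v| =
    k%:R * `|E| * ((N%:R * `|S| * `|u|) * (N%:R * `|T| * `|v|)).
  by rewrite /qbil_bound; ring.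
apply: ler_wpM2l; first by rewrite mulr_ge0.
apply: le_trans (norm_cwmul_le _ _) _.
by apply: ler_pM => //; exact: norm_mulmx_le.
Qed.

Lemma qmap_continuous : continuous qmap.
Proof.
move=> w; apply/(cvgrPdist_lt (FF := nbhs_filter w)) => e e_gt0.
pose C := N%:R * `|qjac w| + qbil_bound + 1.
have C_gt0 : 0 < C by rewrite ltr_wpDl // addr_ge0 ?qbil_bound_ge0 // mulr_ge0.
have r_gt0 : 0 < Num.min 1 (e / C) by rewrite lt_min ltr01 divr_gt0.
have := (cvgrPdist_lt (FF := nbhs_filter w) id w).1 cvg_id _ r_gt0.
apply: filterS => x; rewrite distrC lt_min => /andP[xw_lt1 xw_ltC].
have -> : x = w + 1 *: (x - w) by rewrite scale1r addrC subrK.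
rewrite qmap_taylor !scale1r expr1n scale1r -[qmap w + _ + _]addrA opprD addNKr.
rewrite normrN; apply: le_lt_trans (ler_normD _ _) _.
have jac_le : `|qjac w *m (x - w)| <= N%:R * `|qjac w| * `|x - w|.
  exact: norm_mulmx_le.
have bil_le : `|qbil (x - w) (x - w)| <= qbil_bound * `|x - w|.
  apply: le_trans (norm_qbil_le _ _) _; rewrite -[leRHS]mulr1.
  by apply: ler_wpM2l; [rewrite mulr_ge0 ?qbil_bound_ge0 | exact: ltW].
have Cxw_lt : C * `|x - w| < e by rewrite mulrC -ltr_pdivlMr.
have xw_ge0 := normr_ge0 (x - w); have bound_ge0 := qbil_bound_ge0.
have jac_ge0 : 0 <= N%:R * `|qjac w| by rewrite mulr_ge0.
rewrite /C in Cxw_lt; nra.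
Qed.

Lemma qmap_expand w a b : qmap a = qmap b +
  (qjac w *m (a - b) + (qbil (b - w) (a - b) + qbil (a - b) (b - w) + qbil (a - b) (a - b))).
Proof.
have := qmap_taylor b (a - b) 1.
rewrite !scale1r expr1n scale1r [b + (a - b)]addrC subrK => ->.
have -> : qjac b *m (a - b) =
    qjac w *m (a - b) + qbil (b - w) (a - b) + qbil (a - b) (b - w).
  by rewrite -qjacD [w + _]addrC subrK.
by rewrite -!addrA.
Qed.

(* With e := a - b and z := b - w, P J(w) = 1 gives e = - P (B(z, e) + B(e, z) + B(e, e)),
   hence |e| <= K (2 |z| + |e|) |e| where K (2 |z| + |e|) < 1 on the ball of radius
   1 / (4 K + 1). *)
Lemma qmap_inj_near (P : 'M[R]_N) w : P *m qjac w = 1%:M ->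
  exists2 e : R, 0 < e &
    forall a b, ball w e a -> ball w e b -> qmap a = qmap b -> a = b.
Proof.
move=> PJ; pose K := N%:R * `|P| * qbil_bound.
have K_ge0 : 0 <= K by rewrite !mulr_ge0 ?qbil_bound_ge0.
pose r := (4 * K + 1)^-1.
have r_gt0 : 0 < r by rewrite invr_gt0 ltr_wpDl // mulr_ge0.
have r_inv : r * (4 * K + 1) = 1 by rewrite mulVf // gt_eqF // ltr_wpDl // mulr_ge0.
exists r => // a b; rewrite -!ball_normE /= => wa wb qab.
set e := a - b; set z := b - w.
pose Q := qbil z e + qbil e z + qbil e e.
have /addrI rest0 : qmap b + 0 = qmap b + (qjac w *m e + Q).
  by rewrite addr0 -qmap_expand qab.
have e_eq : e = - (P *m Q).
  have Je : qjac w *m e = - Q by apply/eqP; rewrite -addr_eq0 -rest0.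
  by rewrite -[e]mul1mx -PJ -mulmxA Je mulmxN.
have Q_le : `|Q| <= qbil_bound * (2 * `|z| + `|e|) * `|e|.
  have := norm_qbil_le z e; have := norm_qbil_le e z; have := norm_qbil_le e e.
  have := ler_normD (qbil z e + qbil e z) (qbil e e).
  have := ler_normD (qbil z e) (qbil e z).
  rewrite /Q; nra.
have e_le : `|e| <= K * (2 * `|z| + `|e|) * `|e|.
  rewrite {1}e_eq normrN; apply: le_trans (norm_mulmx_le _ _) _.
  have -> : K * (2 * `|z| + `|e|) * `|e| =
      N%:R * `|P| * (qbil_bound * (2 * `|z| + `|e|) * `|e|) by rewrite /K; ring.
  by rewrite ler_wpM2l ?mulr_ge0.
have z_lt : `|z| < r by rewrite /z distrC.
have e_lt : `|e| < 2 * r.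
  have := ler_distD w a b; rewrite [`|a - w|]distrC; lra.
have e_ge0 := normr_ge0 e; have z_ge0 := normr_ge0 z.
have contraction : K * (2 * `|z| + `|e|) < 1 by nra.
by apply/eqP; rewrite -subr_eq0 -normr_le0; nra.
Qed.

End QuadraticMap.

Lemma sum_binS {R : pzRingType} {V : lmodType R} (X : nat -> nat -> V) m :
  \sum_(i < m.+1) 'C(m, i)%:R *: (X (m - i).+1 i + X (m - i)%N i.+1) =
  \sum_(i < m.+2) 'C(m.+1, i)%:R *: X (m.+1 - i)%N i.
Proof.
under eq_bigr do rewrite scalerDr.
rewrite big_split /= [in RHS]big_ord_recl /=.
under [in RHS]eq_bigr do rewrite binS natrD scalerDl subSS.
rewrite [in RHS]big_split /= addrA; congr (_ + _).
rewrite big_ord_recl /= [in RHS]big_ord_recr /= (@bin_small m m.+1) //.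
rewrite !bin0 !subn0 scale0r addr0; congr (_ + _).
by apply: eq_bigr => i _; rewrite /bump /= subnSK.
Qed.

Definition curve {R : numFieldType} {V : normedModType R} (W : V -> V) (u s : V)
  (r : R) : V := W (r *: u + s).

Section SmoothRightInverse.
Context {R : realType} {N k : nat} {c : 'cV[R]_N} {L : 'M[R]_N}
  {E : 'M[R]_(N, k)} {S T : 'M[R]_(k, N)} {W : 'cV[R]_N -> 'cV[R]_N} {delta : R}.
Hypothesis W_smooth : smooth_on (ball 0 delta) W.
Hypothesis qmapK : forall y, ball 0 delta y -> qmap c L E S T (W y) = y.

Section Curve.
Variables u s : 'cV[R]_N.

Local Notation gamma := (curve W u s).

Lemma derive1n_curve m :
  derive1n m gamma = fun r => Defs.iterD (nseq m u) W (r *: u + s).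
Proof.
elim: m => [//|m IHm]; rewrite derive1nS IHm; apply/funext => r /=.
rewrite /derive1 /derive.
by under eq_fun => h do rewrite scalerDl -addrA.
Qed.

Lemma line_in_ball_near r : ball 0 delta (r *: u + s) ->
  \forall t \near r, ball 0 delta (t *: u + s).
Proof.
move=> in_ball; have line_cvg : (fun t : R => t *: u + s) @ r --> r *: u + s.
  by apply: cvgD; [apply: cvgZr_tmp; exact: cvg_id | exact: cvg_cst].
by apply: line_cvg; apply: open_nbhs_nbhs; split => //; exact: ball_open.
Qed.

Lemma is_derive_curve m r : ball 0 delta (r *: u + s) ->
  is_derive r 1 (derive1n m gamma) (derive1n m.+1 gamma r).
Proof.
move=> in_ball; have curve_der : derivable (derive1n m gamma) r 1.
  have [iterD_der _] := W_smooth (nseq m u).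
  rewrite derive1n_curve; move: (iterD_der (r *: u + s) u in_ball).
  rewrite /derivable; set g1 := fun h => h^-1 *: _; set g2 := fun h => h^-1 *: _.
  suff -> : g1 = g2 by [].
  by apply/funext => h; rewrite /g1 /g2 /= [_%:A]mulr1 scalerDl addrA.
by apply: (DeriveDef curve_der); rewrite derive1nS derive1E.
Qed.

Definition qmap_curve_derive m r : 'cV[R]_N := L *m derive1n m gamma r +
  \sum_(i < m.+1) 'C(m, i)%:R *:
    qbil E S T (derive1n (m - i) gamma r) (derive1n i gamma r).

Lemma is_derive_qmap_curve_derive m r : ball 0 delta (r *: u + s) ->
  is_derive r 1 (qmap_curve_derive m) (qmap_curve_derive m.+1 r).
Proof.
move=> in_ball.
have -> : qmap_curve_derive m = (fun t => L *m derive1n m gamma t) +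
    \sum_(i < m.+1) (fun t => 'C(m, i)%:R *:
       qbil E S T (derive1n (m - i) gamma t) (derive1n i gamma t)).
  by apply/funext => t; rewrite fct_sumE.
apply: is_derive_eq.
  apply: is_deriveD; first exact: (is_derive_mulmx L (is_derive_curve m r in_ball)).
  apply: is_derive_sum => i; apply: is_deriveZ.
  exact: (is_derive_qbil E S T (is_derive_curve (m - i) r in_ball)
                                (is_derive_curve i r in_ball)).
rewrite /qmap_curve_derive; congr (_ + _).
exact: (sum_binS (fun a b => qbil E S T (derive1n a gamma r) (derive1n b gamma r))).
Qed.

(* qmap o gamma coincides with the affine map t |-> t u + s near r. *)
Lemma qmap_curve_derive_eq m r : (0 < m)%N -> ball 0 delta (r *: u + s) ->
  qmap_curve_derive m r = (m == 1)%:R *: u.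
Proof.
elim: m r => [//|m IHm] r _ in_ball.
have near_ball := line_in_ball_near r in_ball.
case: m IHm => [|m] IHm.
  pose G := cst c + (fun t => L *m gamma t) + (fun t => qbil E S T (gamma t) (gamma t)).
  have G_der : is_derive r 1 G (qmap_curve_derive 1 r).
    have curve_der := is_derive_curve 0 r in_ball.
    apply: is_derive_eq.
      exact: (is_deriveD (is_deriveD (is_derive_cst c r 1) (is_derive_mulmx L curve_der))
                         (is_derive_qbil E S T curve_der curve_der)).
    rewrite /qmap_curve_derive !big_ord_recl big_ord0 /= add0r addr0.
    by rewrite /bump /= bin0 binn mulr1n !scale1r.
  have G_line : \forall t \near r, G t = t *: u + s.
    by apply: filterS near_ball => t /qmapK.
  have := near_eq_derive (1 : R) G_line.
  rewrite (@derive_val _ _ _ _ _ _ _ G_der).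
  by rewrite (@derive_val _ _ _ _ _ _ _ (is_derive_line u s r)) scale1r.
have const_near : \forall t \near r,
    qmap_curve_derive m.+1 t = cst ((m.+1 == 1)%:R *: u) t.
  by apply: filterS near_ball => t; exact: IHm.
have := near_eq_derive (1 : R) const_near.
rewrite (@derive_val _ _ _ _ _ _ _ (is_derive_qmap_curve_derive m.+1 r in_ball)).
by rewrite derive_cst => ->; rewrite mulr0n scale0r.
Qed.

Lemma qjac_curve_derive1 r : ball 0 delta (r *: u + s) ->
  qjac L E S T (gamma r) *m derive1n 1 gamma r = u.
Proof.
move=> in_ball; have := qmap_curve_derive_eq 1 r isT in_ball.
rewrite /qmap_curve_derive !big_ord_recl big_ord0 /= addr0 /bump /= bin0 binn.
by rewrite mulr1n !scale1r qjacE -addrA [qbil _ _ _ _ _ + _]addrC.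
Qed.

Lemma qjac_curve_deriveS q r : (0 < q)%N -> ball 0 delta (r *: u + s) ->
  qjac L E S T (gamma r) *m derive1n q.+1 gamma r =
  - \sum_(1 <= i < q.+1) 'C(q.+1, i)%:R *:
      qbil E S T (derive1n (q.+1 - i) gamma r) (derive1n i gamma r).
Proof.
move=> q_gt0 in_ball; have := qmap_curve_derive_eq q.+1 r isT in_ball.
rewrite eqSS -[q == 0%N]negbK -lt0n q_gt0 mulr0n scale0r.
rewrite /qmap_curve_derive big_ord_recl big_ord_recr big_add1 big_mkord /=.
under eq_bigr do rewrite add0n.
rewrite /bump /= add0n bin0 binn !mulr1n !scale1r subnn => sum_eq0.
apply/eqP; rewrite qjacE -addr_eq0 -[X in _ == X]sum_eq0; apply/eqP.
by rewrite -!addrA; congr (_ + _); rewrite addrC -addrA.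
Qed.

End Curve.

Lemma qjac_mulmx_jacF : 0 < delta -> qjac L E S T (W 0) *m jacF W 0 = 1%:M.
Proof.
move=> delta_gt0; apply/matrixP => i j.
have in_ball : ball (0 : 'cV[R]_N) delta (0 *: delta_mx j 0 + 0).
  by rewrite scale0r addr0; exact: ballxx.
have := qjac_curve_derive1 (delta_mx j 0) 0 0 in_ball.
rewrite derive1n_curve /curve /= scale0r addr0 => jac_col.
have jacF_col : jacF W 0 *m delta_mx j 0 = 'D_(delta_mx j 0) W 0.
  by rewrite -colE; apply/matrixP => a b; rewrite !mxE (ord1 b).
move: (congr1 (fun M : 'cV[R]_N => M i 0) jac_col).
by rewrite -jacF_col mulmxA -colE !mxE eqxx andbT => ->.
Qed.

Lemma W_qmap_eventually (a : nat -> 'cV[R]_N) : 0 < delta -> a @ \oo --> W 0 ->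
  \forall j \near \oo,
    ball 0 delta (qmap c L E S T (a j)) /\ W (qmap c L E S T (a j)) = a j.
Proof.
move=> delta_gt0 a_cvg.
have [e e_gt0 qmap_inj] :=
  qmap_inj_near c L E S T _ _ (mulmx1C (qjac_mulmx_jacF delta_gt0)).
have W_cvg : W y @[y --> (0 : 'cV[R]_N)] --> W 0.
  have [_ W_cont] := W_smooth [::].
  move: W_cont; rewrite continuous_open_subspace; last exact: ball_open.
  by apply; apply: mem_set; exact: ballxx.
have qa_cvg : qmap c L E S T (a j) @[j --> \oo] --> (0 : 'cV[R]_N).
  have := cvg_comp _ _ a_cvg (qmap_continuous c L E S T (W 0)).
  by rewrite qmapK //; exact: ballxx.
have Wqa_cvg := cvg_comp _ _ qa_cvg W_cvg.
near=> j.
have in_ball : ball 0 delta (qmap c L E S T (a j)).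
  by near: j; exact: cvg_ball qa_cvg _ delta_gt0.
split => //; apply: qmap_inj; last exact: qmapK.
  by near: j; exact: cvg_ball Wqa_cvg _ e_gt0.
by near: j; exact: cvg_ball a_cvg _ e_gt0.
Unshelve. all: by end_near. Qed.

End SmoothRightInverse.

Section EuclideanNorm.
Context {R : realType} {p : nat}.

Lemma enorm_eq0 (r : 'cV[R]_p) : enorm r = 0 -> r = 0.
Proof.
move/eqP; rewrite /enorm sqrtr_eq0 => sum_le0.
have sum_eq0 : \sum_i r i 0 ^+ 2 = 0.
  by apply/le_anti; rewrite sum_le0 sumr_ge0 // => i _; exact: sqr_ge0.
apply/matrixP => i j; rewrite (ord1 j) mxE; apply/eqP; rewrite -sqrf_eq0; apply/eqP.
exact: (psumr_eq0P (fun i _ => sqr_ge0 (r i 0)) sum_eq0).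
Qed.

Lemma enorm_nml (r : 'cV[R]_p) : enorm r *: nml r = r.
Proof.
rewrite /nml; case: eqP => [->|r_neq0]; first by rewrite scaler0.
by rewrite scalerA mulfV ?scale1r //; apply/eqP => /enorm_eq0.
Qed.

End EuclideanNorm.

Section ScaledCurveDerivatives.
Context {R : realType} {n mI mE k : nat}.
Local Notation N := (n + (mI + mE))%N.
Context {c : 'cV[R]_N} {L : 'M[R]_N} {E : 'M[R]_(N, k)} {S T : 'M[R]_(k, N)}
  {W : 'cV[R]_N -> 'cV[R]_N} {delta : R}.
Hypothesis W_smooth : smooth_on (ball 0 delta) W.
Hypothesis qmapK : forall y, ball 0 delta y -> qmap c L E S T (W y) = y.

Lemma qjac_what mu r q : (0 < q)%N -> ball 0 delta (r + Defs.shift n mI mE mu) ->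
  qjac L E S T (W (r + Defs.shift n mI mE mu)) *m what W mu r q.+1 =
  - \sum_(1 <= i < q.+1) 'C(q.+1, i)%:R *:
      qbil E S T (what W mu r (q.+1 - i)) (what W mu r i).
Proof.
rewrite -{1 2}(enorm_nml r) => q_gt0 in_ball.
rewrite /what -scalemxAr.
rewrite (qjac_curve_deriveS W_smooth qmapK _ _ q _ q_gt0 in_ball).
rewrite scalerN scaler_sumr; congr (- _).
apply: eq_big_nat => i /andP[_ i_lt]; rewrite qbilZl qbilZr !scalerA; congr (_ *: _).
by rewrite -mulrA -exprD subnK ?(ltnW i_lt) // mulrC.
Qed.

End ScaledCurveDerivatives.

Section QuadraticProgram.
Context {R : realType} {n mI mE : nat} (H : 'M[R]_n) (d : 'cV[R]_n)
  (AI : 'M[R]_(mI, n)) (bI : 'cV[R]_mI) (AE : 'M[R]_(mE, n)) (bE : 'cV[R]_mE).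
Local Notation N := (n + (mI + mE))%N.

(* F^0 = qmap qp_const qp_lin qp_embed lIsel (A_I xsel): only the complementarity
   block diag([lambda]_I) (A_I x - b_I) is nonlinear, and its quadratic part is
   the componentwise product of [lambda]_I = lIsel w and A_I x = A_I xsel w. *)
Definition xsel : 'M[R]_(n, N) := usubmx 1%:M.
Definition lsel : 'M[R]_(mI + mE, N) := dsubmx 1%:M.
Definition lIsel : 'M[R]_(mI, N) := usubmx lsel.
Definition qp_const : 'cV[R]_N := col_mx d (col_mx 0 (- bE)).
Definition qp_lin : 'M[R]_N :=
  col_mx (H *m xsel - (qp_A AI AE)^T *m lsel)
         (col_mx (- (diag_mx bI^T *m lIsel)) (AE *m xsel)).
Definition qp_embed : 'M[R]_(N, mI) := col_mx 0 (col_mx 1%:M 0).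

Lemma wxE w : wx w = xsel *m w.
Proof. by rewrite /wx /xsel mul_usub_mx mul1mx. Qed.

Lemma wlE w : wl w = lsel *m w.
Proof. by rewrite /wl /lsel mul_dsub_mx mul1mx. Qed.

Lemma wlIE w : wlI w = lIsel *m w.
Proof. by rewrite /wlI /lIsel mul_usub_mx -wlE. Qed.

Lemma qbil_qp v v' :
  qbil qp_embed lIsel (AI *m xsel) v v' =
  col_mx 0 (col_mx (cwmul (wlI v) (AI *m wx v')) 0).
Proof. by rewrite /qbil /qp_embed !mul_col_mx !mul0mx mul1mx wlIE wxE mulmxA. Qed.

Lemma Fmu0_qmap :
  Fmu H d AI bI AE bE 0 = qmap qp_const qp_lin qp_embed lIsel (AI *m xsel).
Proof.
apply/funext => w.
rewrite /Fmu /qmap /qbil /qp_embed /qp_lin /qp_const !mul_col_mx !mul0mx mul1mx.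
rewrite !add_col_mx /qp_g /qp_cI /qp_cE wxE wlE wlIE !mulmxBl -!mulmxA.
congr col_mx; first by rewrite addr0 addrA [d + _]addrC.
congr col_mx; last by rewrite addr0 addrC.
rewrite scale0r subr0 add0r cwmulDl -scaleN1r cwmulZl scaleN1r.
by rewrite [cwmul (AI *m _) _]cwmulC addrC cwmul_diag_mx mulNmx mulmxA.
Qed.

Lemma Fmu_add_shift mu w :
  Fmu H d AI bI AE bE mu w + Defs.shift n mI mE mu = Fmu H d AI bI AE bE 0 w.
Proof. by rewrite /Fmu /Defs.shift !add_col_mx !addr0 scale0r subr0 subrK. Qed.

End QuadraticProgram.

Theorem proposition3 (R : realType) (n mI mE : nat)
  (H : 'M[R]_n) (d : 'cV[R]_n)
  (AI : 'M[R]_(mI, n)) (bI : 'cV[R]_mI)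
  (AE : 'M[R]_(mE, n)) (bE : 'cV[R]_mE)
  (HsymH : H^T = H)
  (xstar : 'cV[R]_n) (lstar : 'cV[R]_(mI + mE))
  (* KKT point *)
  (KKT_stat : qp_g H d xstar - (qp_A AI AE)^T *m lstar = 0)
  (KKT_feasI : forall i, 0 <= qp_cI AI bI xstar i 0)
  (KKT_feasE : qp_cE AE bE xstar = 0)
  (KKT_dual : forall i : 'I_mI, 0 <= lstar (lshift mE i) 0)
  (KKT_compl : forall i : 'I_mI, lstar (lshift mE i) 0 * qp_cI AI bI xstar i 0 = 0)
  (* LICQ: gradients of active inequality and all equality constraints
     are linearly independent *)
  (LICQ : forall (yI : 'cV[R]_mI) (yE : 'cV[R]_mE),
      (forall i, qp_cI AI bI xstar i 0 != 0 -> yI i 0 = 0) ->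
      AI^T *m yI + AE^T *m yE = 0 -> yI = 0 /\ yE = 0)
  (* strict complementarity *)
  (SC : forall i : 'I_mI, qp_cI AI bI xstar i 0 = 0 -> 0 < lstar (lshift mE i) 0)
  (* strong second-order sufficiency *)
  (omega : R) (omega_gt0 : 0 < omega)
  (SOSC : forall p : 'cV[R]_n,
      (forall i : 'I_mI, qp_cI AI bI xstar i 0 = 0 -> (AI *m p) i 0 = 0) ->
      AE *m p = 0 ->
      omega * enorm p ^+ 2 <= (p^T *m H *m p) 0 0)
  (* the implicit function w^{w*,0} *)
  (W : 'cV[R]_(n + (mI + mE)) -> 'cV[R]_(n + (mI + mE)))
  (delta : R) (delta_gt0 : 0 < delta)
  (W_smooth : smooth_on (ball (0 : 'cV[R]_(n + (mI + mE))) delta) W)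
  (W_eq : forall r, ball (0 : 'cV[R]_(n + (mI + mE))) delta r ->
      Fmu H d AI bI AE bE 0 (W r) = r)
  (W_0 : W 0 = col_mx xstar lstar)
  (* the sequences *)
  (mu : nat -> R) (mu_gt0 : forall k, 0 < mu k)
  (mu_decr : forall k, mu k.+1 < mu k)
  (eps : R -> R) (eps_gt0 : forall m, 0 < m -> 0 < eps m)
  (eps_Theta : exists c1 c2 m0 : R, [/\ 0 < c1, 0 < c2, 0 < m0 &
      forall m, 0 < m -> m <= m0 -> c1 * m <= eps m /\ eps m <= c2 * m])
  (w : nat -> 'cV[R]_(n + (mI + mE)))
  (w_approx : forall k, enorm (Fmu H d AI bI AE bE (mu k) (w k.+1)) <= eps (mu k))
  (* subsequence K = range sigma along which w_{k+1} -> w* *)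
  (sigma : nat -> nat) (sigma_incr : forall j, (sigma j < sigma j.+1)%N)
  (w_cvg : (fun j => w (sigma j).+1) @ \oo --> col_mx xstar lstar) :
  \forall j \near \oo, forall q : nat, (0 < q)%N ->
    let k := sigma j in
    let r := Fmu H d AI bI AE bE (mu k.+1) (w k.+1) in
    let hw := what W (mu k.+1) r in
    jacF (Fmu H d AI bI AE bE 0) (w k.+1) *m hw q.+1 =
    - \sum_(1 <= i < q.+1)
        'C(q.+1, i)%:R *:
          col_mx 0 (col_mx (cwmul (wlI (hw (q.+1 - i)%N)) (AI *m wx (hw i))) 0).
Proof.
pose F := qmap (qp_const d bE) (qp_lin H AI bI AE) qp_embed lIsel (AI *m xsel).
have F_eq : Fmu H d AI bI AE bE 0 = F := Fmu0_qmap H d AI bI AE bE.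
have FW : forall y, ball 0 delta y -> F (W y) = y by move=> y; rewrite -F_eq; exact: W_eq.
rewrite -W_0 in w_cvg.
have := W_qmap_eventually W_smooth FW _ delta_gt0 w_cvg.
apply: filterS => j [in_ball WF_eq] q q_gt0 /=.
have shift_eq := Fmu_add_shift H d AI bI AE bE (mu (sigma j).+1) (w (sigma j).+1).
rewrite F_eq in shift_eq.
rewrite F_eq jacF_qmap -{1}WF_eq -/F -shift_eq (qjac_what W_smooth FW) //; last first.
  by rewrite shift_eq.
by congr (- _); apply: eq_bigr => i _; rewrite qbil_qp.
Qed.
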